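(* Let $S$ be an intra-regular semigroup. Then every proper interior ideal $P$ of $S$ is semiprime, i.e. for every interior ideal $A$ of $S$, $A^{2}\subseteq P$ implies $A\subseteq P$.
   Context: A semigroup $S$ is intra-regular if $a\in Sa^{2}S$ for every $a\in S$. A subsemigroup $I$ of $S$ (non-empty with $II\subseteq I$) is an interior ideal if $SIS\subseteq I$. For a subset $A$, $A^{2}=AA=\{ab:a,b\in A\}$. *)

Definition associative {T : Type} (mul : T -> T -> T) : Prop :=
  forall a b c : T, mul a (mul b c) = mul (mul a b) c.

Definition intra_regular {T : Type} (mul : T -> T -> T) : Prop :=
  forall a : T, exists x y : T, a = mul (mul x (mul a a)) y.

Definition subsemigroup {T : Type} (mul : T -> T -> T) (I : T -> Prop) : Prop :=
  (exists a, I a) /\ (forall a b, I a -> I b -> I (mul a b)).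

Definition interior_ideal {T : Type} (mul : T -> T -> T) (I : T -> Prop) : Prop :=
  subsemigroup mul I /\ (forall s a t, I a -> I (mul (mul s a) t)).

Definition proper {T : Type} (P : T -> Prop) : Prop := exists x, ~ P x.

Definition sq_subset {T : Type} (mul : T -> T -> T) (A P : T -> Prop) : Prop :=
  forall a b, A a -> A b -> P (mul a b).

Definition subset {T : Type} (A P : T -> Prop) : Prop := forall a, A a -> P a.

Definition semiprime {T : Type} (mul : T -> T -> T) (P : T -> Prop) : Prop :=
  forall A, interior_ideal mul A -> sq_subset mul A P -> subset A P.


Lemma intra_regular_sq_subset_subset {T : Type} (mul : T -> T -> T)
  (Hir : intra_regular mul) (P : T -> Prop)
  (HSPS : forall s a t, P a -> P (mul (mul s a) t)) (A : T -> Prop) :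
  sq_subset mul A P -> subset A P.
Proof.
  intros HA2 a Ha.
  destruct (Hir a) as [x [y ->]].
  apply HSPS, HA2; exact Ha.
Qed.

Lemma interior_ideal_semiprime {T : Type} (mul : T -> T -> T)
  (Hir : intra_regular mul) (P : T -> Prop) :
  interior_ideal mul P -> semiprime mul P.
Proof.
  intros [_ HSPS] A _.
  exact (intra_regular_sq_subset_subset mul Hir P HSPS A).
Qed.

Theorem mainTheorem6 (T : Type) (mul : T -> T -> T) (Hassoc : associative mul)
  (Hir : intra_regular mul) (P : T -> Prop)
  (HP : interior_ideal mul P) (Hproper : proper P) :
  semiprime mul P.
Proof.
  exact (interior_ideal_semiprime mul Hir P HP).
Qed.
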